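(* Let $\mathcal H$ and $\mathcal K$ be complex Hilbert spaces and $k \in \mathbb N$ with $k < \dim \mathcal H$. Let $\phi \colon \mathcal F_s(\mathcal H) \to \mathcal F_s(\mathcal K)$ be a linear map such that $\phi(\mathcal P_k(\mathcal H)) \subset \mathcal P_f(\mathcal K)$. Then there exists $m \in \mathbb N \cup \{0\}$ with $m \le \dim \mathcal K$ such that $\phi(\mathcal P_k(\mathcal H)) \subset \mathcal P_m(\mathcal K)$.
   Context: For a complex Hilbert space $\mathcal H$, $\mathcal F_s(\mathcal H)$ is the real vector space of bounded self-adjoint finite-rank operators on $\mathcal H$. A projection is a self-adjoint idempotent bounded operator; $\mathcal P_k(\mathcal H)$ is the set of projections of rank $k$ and $\mathcal P_f(\mathcal H)$ the set of all finite-rank projections. *)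

From HB Require Import structures.
From mathcomp Require Import all_boot all_order all_algebra.
From mathcomp Require Import reals complex.
Set Implicit Arguments. Unset Strict Implicit. Unset Printing Implicit Defensive.
Import Order.TTheory GRing.Theory Num.Theory.
Local Open Scope ring_scope.
Local Open Scope complex_scope.

Section Hilbert.
Variables (R : realType) (V : lmodType R[i]) (ip : V -> V -> R[i]).

Definition inner_product : Prop :=
  [/\ (forall x y, ip y x = (ip x y)^*),
      (forall (a : R[i]) x y z, ip (a *: x + y) z = a * ip x z + ip y z),
      (forall x, 0 <= ip x x) &
      (forall x, ip x x = 0 -> x = 0)].

Definition hnorm (x : V) : R := Num.sqrt (complex.Re (ip x x)).

Definition complete : Prop :=
  forall u : nat -> V,
    (forall e : R, 0 < e -> exists N, forall n m, (N <= n)%N -> (N <= m)%N ->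
        hnorm (u n - u m) < e) ->
    exists l : V, forall e : R, 0 < e -> exists N, forall n, (N <= n)%N ->
        hnorm (u n - l) < e.

Definition hilbert : Prop := inner_product /\ complete.

Definition bounded_op (A : V -> V) : Prop :=
  (forall (a : R[i]) x y, A (a *: x + y) = a *: A x + A y) /\
  exists C : R, forall x, hnorm (A x) <= C * hnorm x.

Definition selfadjoint (A : V -> V) : Prop := forall x y, ip (A x) y = ip x (A y).

Definition lin_indep n (v : 'I_n -> V) : Prop :=
  forall c : 'I_n -> R[i], \sum_(i < n) c i *: v i = 0 -> forall i, c i = 0.

Definition in_span n (v : 'I_n -> V) (y : V) : Prop :=
  exists c : 'I_n -> R[i], y = \sum_(i < n) c i *: v i.

Definition finite_rank (A : V -> V) : Prop :=
  exists n (v : 'I_n -> V), forall x, in_span v (A x).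

Definition rank_eq (A : V -> V) (k : nat) : Prop :=
  exists v : 'I_k -> V, [/\ lin_indep v, (forall i, exists x, A x = v i) &
                             (forall x, in_span v (A x))].

Definition Fs (A : V -> V) : Prop := [/\ bounded_op A, selfadjoint A & finite_rank A].

Definition projection (A : V -> V) : Prop :=
  [/\ bounded_op A, selfadjoint A & forall x, A (A x) = A x].

Definition Pk (k : nat) (A : V -> V) : Prop := projection A /\ rank_eq A k.
Definition Pf (A : V -> V) : Prop := projection A /\ finite_rank A.

Definition dim_gt (k : nat) : Prop := exists v : 'I_k.+1 -> V, lin_indep v.
Definition dim_ge (m : nat) : Prop := exists v : 'I_m -> V, lin_indep v.

End Hilbert.

Definition Fs_linear (R : realType) (H K : lmodType R[i])
  (ipH : H -> H -> R[i]) (ipK : K -> K -> R[i]) (phi : (H -> H) -> (K -> K)) : Prop :=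
  (forall A, Fs ipH A -> Fs ipK (phi A)) /\
  (forall (a b : R) (A B : H -> H), Fs ipH A -> Fs ipH B ->
     phi (fun x => a%:C *: A x + b%:C *: B x) =
     (fun y => a%:C *: phi A y + b%:C *: phi B y)).

(* Write P ~ P' when phi P and phi P' have the same rank; it suffices to show that
   any two rank-k projections are ~-related.
   Rank comparison: if phi P = sum_i a_i phi Q_i and phi P' = sum_i b_i phi Q_i with
   rank-k projections Q_i, sum a = sum b and sum |a_i - b_i| < 2, then for y in
   range (phi P) /\ ker (phi P') one gets
   |y|^2 = sum (a_i - b_i) (<phi Q_i y, y> - |y|^2/2) < |y|^2 unless y = 0, so
   rank (phi P) <= rank (phi P'), and symmetrically.
   Rotation: for a projection G of rank k - 1 and orthonormal u, v orthogonal to its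
   range, the line projections satisfy
   (1 + s^2) p_(u+sv) = (1 - s) p_u + (s^2 - s) p_v + 2s p_(u+v), and the comparison
   gives G + p_(u+sv) ~ G + p_u for s in [0, 1/2] and G + p_(u+sv) ~ G + p_(u+v) for
   s > 0. Hence all rank-k projections whose range contains range G are ~-related.
   Exchange: by Steinitz exchange, any two rank-k projections are joined by a chain
   in which consecutive ranges share a (k - 1)-dimensional subspace. *)

From mathcomp Require Import all_boot all_order all_algebra perm.
From mathcomp Require Import reals complex.
From mathcomp Require Import ring lra.
From Stdlib Require Import Classical FunctionalExtensionality IndefiniteDescription.
Import Order.TTheory GRing.Theory Num.Theory.
Local Open Scope ring_scope.
Local Open Scope complex_scope.
Set Implicit Arguments. Unset Strict Implicit.
Local Notation Re := complex.Re.

Lemma ReD (R : realType) (x y : R[i]) : Re (x + y) = Re x + Re y.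
Proof. by case: x => ? ?; case: y => ? ?. Qed.

Lemma ReMr (R : realType) (a : R) (z : R[i]) : Re (a%:C * z) = a * Re z.
Proof. by case: z => x y /=; ring. Qed.

Section InnerProduct.
Variables (R : realType) (V : lmodType R[i]) (ip : V -> V -> R[i]).
Hypothesis hip : inner_product ip.

Lemma ipC x y : ip y x = conjc (ip x y). Proof. by case: hip. Qed.

Lemma ipDl x y z : ip (x + y) z = ip x z + ip y z.
Proof. by case: hip => _ h _ _; have := h 1 x y z; rewrite scale1r mul1r. Qed.

Lemma ip0l z : ip 0 z = 0.
Proof. by apply: (addrI (ip 0 z)); rewrite -ipDl !addr0. Qed.

Lemma ipZl a x z : ip (a *: x) z = a * ip x z.
Proof. by case: hip => _ h _ _; have := h a x 0 z; rewrite !addr0 ip0l addr0. Qed.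

Lemma ipNl x z : ip (- x) z = - ip x z.
Proof. by rewrite -scaleN1r ipZl mulN1r. Qed.

Lemma ipBl x y z : ip (x - y) z = ip x z - ip y z.
Proof. by rewrite ipDl ipNl. Qed.

Lemma ip0r x : ip x 0 = 0.
Proof. by rewrite ipC ip0l conjc0. Qed.

Lemma ipDr x y z : ip x (y + z) = ip x y + ip x z.
Proof. by rewrite (ipC y x) (ipC z x) ipC ipDl; apply: raddfD. Qed.

Lemma ipZr a x y : ip x (a *: y) = conjc a * ip x y.
Proof. by rewrite (ipC y x) ipC ipZl; apply: rmorphM. Qed.

Lemma ipNr x y : ip x (- y) = - ip x y.
Proof. by rewrite (ipC y x) ipC ipNl; apply: raddfN. Qed.

Lemma ipBr x y z : ip x (y - z) = ip x y - ip x z.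
Proof. by rewrite ipDr ipNr. Qed.

Lemma ipxx_ge0 x : 0 <= ip x x. Proof. by case: hip. Qed.

Lemma ipxx_eq0 x : (ip x x == 0) = (x == 0).
Proof.
by apply/eqP/eqP => [|->]; [case: hip => _ _ _; apply | rewrite ip0l].
Qed.

Lemma ipxx_real x : ip x x = (Re (ip x x))%:C.
Proof.
by have := ipxx_ge0 x; case: (ip x x) => a b; rewrite lecE /= => /andP[/eqP ->].
Qed.

Lemma Re_ipxx_ge0 x : 0 <= Re (ip x x).
Proof. by rewrite -ler0c -ipxx_real ipxx_ge0. Qed.

Lemma Re_ipxx_gt0 x : x != 0 -> 0 < Re (ip x x).
Proof.
rewrite lt_def Re_ipxx_ge0 andbT -ipxx_eq0 => /eqP hx; apply/eqP => h.
by apply: hx; rewrite ipxx_real h.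
Qed.

Lemma conj_ipxx x : conjc (ip x x) = ip x x.
Proof. by rewrite ipxx_real conjc_real. Qed.

Lemma ip_inj_l x y : (forall z, ip x z = ip y z) -> x = y.
Proof.
by move=> h; apply/eqP; rewrite -subr_eq0 -ipxx_eq0 ipBl h subrr.
Qed.

End InnerProduct.

Section LinearMaps.
Variables (R : realType) (V : lmodType R[i]).

Definition clinear (A : V -> V) := forall a x y, A (a *: x + y) = a *: A x + A y.

Variables (A : V -> V) (hA : clinear A).

Lemma clinear0 : A 0 = 0.
Proof.
have := hA 1 0 0; rewrite scaler0 addr0 scale1r => h.
by apply: (addrI (A 0)); rewrite addr0 -h.
Qed.

Lemma clinearD x y : A (x + y) = A x + A y.
Proof. by rewrite -[x]scale1r hA !scale1r. Qed.

Lemma clinearZ a x : A (a *: x) = a *: A x.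
Proof. by rewrite -[a *: x]addr0 hA clinear0 addr0. Qed.

Lemma clinearN x : A (- x) = - A x.
Proof. by rewrite -scaleN1r clinearZ scaleN1r. Qed.

Lemma clinearB x y : A (x - y) = A x - A y.
Proof. by rewrite clinearD clinearN. Qed.

Lemma clinear_sum (I : Type) (r : seq I) (P : pred I) (F : I -> V) :
  A (\sum_(i <- r | P i) F i) = \sum_(i <- r | P i) A (F i).
Proof. exact: (big_morph A clinearD clinear0). Qed.

End LinearMaps.

Section OrthogonalProjections.
Variables (R : realType) (V : lmodType R[i]) (ip : V -> V -> R[i]).
Hypothesis hip : inner_product ip.

Definition orthoproj (A : V -> V) :=
  [/\ clinear A, selfadjoint ip A & forall x, A (A x) = A x].

Variable A : V -> V.
Hypothesis hA : orthoproj A.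

Lemma orthoproj_pythagoras x : ip x x = ip (A x) (A x) + ip (x - A x) (x - A x).
Proof.
case: hA => hl hs hi.
set w := x - A x.
have orth : ip (A x) w = 0 by rewrite hs (clinearB hl) hi subrr (ip0r hip).
have orth' : ip w (A x) = 0 by rewrite (ipC hip) orth conjc0.
have ex : x = A x + w by rewrite /w addrC subrK.
by clearbody w; rewrite {1 2}ex (ipDl hip) !(ipDr hip) orth orth' addr0 add0r.
Qed.

Lemma orthoproj_ker x : A (x - A x) = 0.
Proof. by case: hA => hl _ hi; rewrite (clinearB hl) hi subrr. Qed.

Lemma orthoproj_form x : 0 <= Re (ip (A x) x) <= Re (ip x x).
Proof.
case: (hA) => _ hs hi.
have -> : ip (A x) x = ip (A x) (A x) by rewrite -hs hi.
rewrite (Re_ipxx_ge0 hip) /= (orthoproj_pythagoras x) ReD lerDl.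
by rewrite (Re_ipxx_ge0 hip).
Qed.

Lemma orthoproj_projection : projection ip A.
Proof.
case: (hA) => hl hs hi; split => //; split => //; exists 1 => x.
rewrite mul1r /hnorm ler_sqrt ?(Re_ipxx_ge0 hip) // (orthoproj_pythagoras x) ReD lerDl.
by rewrite (Re_ipxx_ge0 hip).
Qed.

End OrthogonalProjections.

Lemma projection_orthoproj (R : realType) (V : lmodType R[i]) (ip : V -> V -> R[i]) A :
  projection ip A -> orthoproj ip A.
Proof. by case=> [[hl _] hs hi]; split. Qed.

Definition insert_at (T : Type) n (i : 'I_n.+1) (e : T) (f : 'I_n -> T) : 'I_n.+1 -> T :=
  fun l => if unlift i l is Some j then f j else e.

Lemma insert_at_lift T n (i : 'I_n.+1) e (f : 'I_n -> T) j : insert_at i e f (lift i j) = f j.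
Proof. by rewrite /insert_at liftK. Qed.

Lemma insert_at_id T n (i : 'I_n.+1) e (f : 'I_n -> T) : insert_at i e f i = e.
Proof. by rewrite /insert_at unlift_none. Qed.

Lemma insert_atK T n (i : 'I_n.+1) e (f : 'I_n -> T) : (fun j => insert_at i e f (lift i j)) = f.
Proof. by apply: functional_extensionality => j; rewrite insert_at_lift. Qed.

Lemma insert_at_drop T n (i : 'I_n.+1) (c : 'I_n.+1 -> T) :
  insert_at i (c i) (fun j => c (lift i j)) = c.
Proof.
apply: functional_extensionality => l.
by case: (unliftP i l) => [j ->|->]; rewrite ?insert_at_lift ?insert_at_id.
Qed.

Lemma choice_fun (A B : Type) (P : A -> B -> Prop) :
  (forall a, exists b, P a b) -> exists f : A -> B, forall a, P a (f a).
Proof.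
move=> h; exists (fun a => proj1_sig (constructive_indefinite_description _ (h a))).
by move=> a; case: constructive_indefinite_description.
Qed.

Section Span.
Variables (R : realType) (V : lmodType R[i]).
Implicit Types (n : nat) (x y : V).

Lemma span0 n (v : 'I_n -> V) : in_span v 0.
Proof. by exists (fun _ => 0); rewrite big1 // => i _; rewrite scale0r. Qed.

Lemma spanD n (v : 'I_n -> V) x y : in_span v x -> in_span v y -> in_span v (x + y).
Proof.
move=> [c ->] [d ->]; exists (fun i => c i + d i).
by rewrite -big_split /=; apply: eq_bigr => i _; rewrite scalerDl.
Qed.

Lemma spanZ n (v : 'I_n -> V) a x : in_span v x -> in_span v (a *: x).
Proof.
move=> [c ->]; exists (fun i => a * c i).
by rewrite scaler_sumr; apply: eq_bigr => i _; rewrite scalerA.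
Qed.

Lemma spanB n (v : 'I_n -> V) x y : in_span v x -> in_span v y -> in_span v (x - y).
Proof. by move=> hx hy; apply: spanD => //; rewrite -scaleN1r; apply: spanZ. Qed.

Lemma sum_delta n (v : 'I_n -> V) i :
  \sum_(j < n) (if j == i then 1 else 0) *: v j = v i.
Proof.
rewrite (bigD1 i) //= eqxx scale1r big1 ?addr0 // => j /negbTE ->.
by rewrite scale0r.
Qed.

Lemma span_mem n (v : 'I_n -> V) i : in_span v (v i).
Proof. by exists (fun j => if j == i then 1 else 0); rewrite sum_delta. Qed.

Lemma span_sum n (v : 'I_n -> V) (I : Type) (r : seq I) (P : pred I) (F : I -> V) :
  (forall i, P i -> in_span v (F i)) -> in_span v (\sum_(i <- r | P i) F i).
Proof. by apply: big_ind => //; [exact: span0 | exact: spanD]. Qed.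

Lemma span_trans n m (v : 'I_n -> V) (w : 'I_m -> V) y :
  in_span w y -> (forall j, in_span v (w j)) -> in_span v y.
Proof. by move=> [c ->] h; apply: span_sum => j _; apply: spanZ. Qed.

Lemma lin_indep_lift n (v : 'I_n.+1 -> V) (i : 'I_n.+1) :
  lin_indep v -> lin_indep (fun j => v (lift i j)).
Proof.
move=> hv d hd j; have := hv (insert_at i 0 d).
rewrite (bigD1_ord i) //= insert_at_id scale0r add0r.
under eq_bigr do rewrite insert_at_lift.
by move=> /(_ hd (lift i j)); rewrite insert_at_lift.
Qed.

Lemma steinitz m n (v : 'I_m -> V) (u : 'I_n -> V) :
  lin_indep v -> (forall i, in_span u (v i)) -> (m <= n)%N.
Proof.
move=> hv /choice_fun[Mf hM]; rewrite leqNgt; apply/negP => hnm.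
pose M : 'M[R[i]]_(m, n) := \matrix_(i, j) Mf i j.
have /rowV0Pn[c /sub_kermxP hc /rV0Pn[i0 hi0]] : kermx M != 0.
  rewrite -mxrank_eq0 mxrank_ker subn_eq0 -ltnNge.
  exact: leq_ltn_trans (rank_leq_col M) hnm.
suff: \sum_(i < m) c 0 i *: v i = 0 by move/hv/(_ i0)/eqP; rewrite (negbTE hi0).
transitivity (\sum_(j < n) (c *m M) 0 j *: u j); last first.
  by rewrite hc big1 // => j _; rewrite mxE scale0r.
transitivity (\sum_(i < m) \sum_(j < n) (c 0 i * Mf i j) *: u j).
  by apply: eq_bigr => i _; rewrite (hM i) scaler_sumr; apply: eq_bigr => j _; rewrite scalerA.
rewrite exchange_big /=; apply: eq_bigr => j _; rewrite -scaler_suml !mxE.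
by congr (_ *: _); apply: eq_bigr => i _; rewrite mxE.
Qed.

Lemma span_insert n (g : 'I_n -> V) i a y : in_span g y -> in_span (insert_at i a g) y.
Proof.
by move=> hy; apply: span_trans hy _ => j; rewrite -(insert_at_lift i a g); apply: span_mem.
Qed.

Lemma lin_indep_insert n (g : 'I_n -> V) i a :
  lin_indep g -> ~ in_span g a -> lin_indep (insert_at i a g).
Proof.
move=> hg ha c; rewrite (bigD1_ord i) //= insert_at_id.
under eq_bigr do rewrite insert_at_lift.
move=> hc; have ci : c i = 0.
  case: (eqVneq (c i) 0) => // ci_ne0; case: ha.
  have -> : a = - (c i)^-1 *: \sum_j c (lift i j) *: g j.
    apply: (scalerI ci_ne0); rewrite scalerA mulrN mulfV // scaleN1r.
    by apply/eqP; rewrite -addr_eq0 hc.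
  by apply: spanZ; apply: span_sum => j _; apply: spanZ; apply: span_mem.
move: hc; rewrite ci scale0r add0r => /hg cg0 l.
by case: (unliftP i l) => [j ->|->].
Qed.

Lemma insert_notin_span n (g : 'I_n -> V) i a : lin_indep (insert_at i a g) -> ~ in_span g a.
Proof.
move=> ha [d hd]; have := ha (insert_at i (-1) d); rewrite (bigD1_ord i) //= !insert_at_id.
under eq_bigr do rewrite !insert_at_lift.
rewrite -hd scaleN1r addNr => /(_ erefl i).
by rewrite insert_at_id => /eqP; rewrite oppr_eq0 oner_eq0.
Qed.

Lemma basis_extraction n (w : 'I_n -> V) :
  exists m (v : 'I_m -> V), [/\ lin_indep v, (forall i, exists j, v i = w j) &
                                (forall j, in_span v (w j))].
Proof.
elim: n w => [|n IH] w.
  by exists 0%N, w; split => [c _ []|i|[]] //; exists i.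
have [m [v [hv hvw hwv]]] := IH (fun j => w (lift ord_max j)).
case: (classic (in_span v (w ord_max))) => hlast.
  exists m, v; split => // [i|j].
    by have [j ->] := hvw i; exists (lift ord_max j).
  by case: (unliftP ord_max j) => [j' ->|->].
exists m.+1, (insert_at ord_max (w ord_max) v); split; first exact: lin_indep_insert.
  move=> l; case: (unliftP ord_max l) => [j ->|->]; last by rewrite insert_at_id; exists ord_max.
  by rewrite insert_at_lift; have [j' ->] := hvw j; exists (lift ord_max j').
move=> l; case: (unliftP ord_max l) => [j ->|->]; first exact: span_insert.
by have := span_mem (insert_at ord_max (w ord_max) v) ord_max; rewrite insert_at_id.
Qed.

Lemma lin_indep_perm n (v : 'I_n -> V) (s : {perm 'I_n}) :
  lin_indep v -> lin_indep (v \o s).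
Proof.
move=> hv c hc i; have := hv (c \o (s^-1)%g); rewrite (reindex_inj (@perm_inj _ s)) /=.
under eq_bigr do rewrite permK.
by move=> /(_ hc (s i)); rewrite /= permK.
Qed.

Lemma lin_indep_coord n (v : 'I_n -> V) (c d : 'I_n -> R[i]) :
  lin_indep v -> \sum_i c i *: v i = \sum_i d i *: v i -> forall i, c i = d i.
Proof.
move=> hv e i; apply/eqP; rewrite -subr_eq0; apply/eqP; move: i; apply: hv.
by under eq_bigr do rewrite scalerBl; rewrite sumrB e subrr.
Qed.

Lemma exchange_index n (c f : 'I_n.+1 -> V) (j : 'I_n.+1) :
  lin_indep c -> lin_indep f -> (forall i : 'I_n.+1, (i < j)%N -> c i = f i) ->
  exists2 l : 'I_n.+1, (j <= l)%N & ~ in_span (fun m => c (lift l m)) (f j).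
Proof.
move=> hc hf cf.
case: (classic (in_span c (f j))) => [[lam hlam]|fj_out]; last first.
  by exists j => // hin; apply: fj_out; apply: span_trans hin _ => m; apply: span_mem.
have [l jl lam_l] : exists2 l : 'I_n.+1, (j <= l)%N & lam l != 0.
  case: (classic (exists2 l : 'I_n.+1, (j <= l)%N & lam l != 0)) => // none; exfalso.
  have lam0 (l : 'I_n.+1) : (j <= l)%N -> lam l = 0.
    by move=> jl; apply/eqP/negPn/negP => ne; apply: none; exists l.
  pose d (l : 'I_n.+1) := if (l < j)%N then lam l else if l == j then -1 else 0.
  have : \sum_l d l *: f l = 0.
    transitivity (\sum_l (lam l *: c l - (if l == j then 1 else 0) *: f l)).
      apply: eq_bigr => l _; rewrite /d; case: ltnP => [lj|jl].
        by rewrite (cf _ lj) ifN ?scale0r ?subr0 // neq_ltn lj.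
      rewrite lam0 // scale0r sub0r; case: (l == j); first by rewrite scaleN1r scale1r.
      by rewrite !scale0r oppr0.
    by rewrite sumrB sum_delta -hlam subrr.
  by move/hf/(_ j)/eqP; rewrite /d ltnn eqxx oppr_eq0 oner_eq0.
exists l => // -[mu hmu]; move/eqP: lam_l; apply.
transitivity (insert_at l 0 mu l); last exact: insert_at_id.
apply: (lin_indep_coord hc); rewrite -hlam hmu (bigD1_ord l) //= insert_at_id scale0r add0r.
by apply: eq_bigr => m _; rewrite insert_at_lift.
Qed.

End Span.

(* As [sum c = 0], the sum equals [sum c_i (r_i - N/2)], and [|r_i - N/2| <= N/2]. *)
Lemma zero_sum_comb_lt (R : realFieldType) n (c r : 'I_n -> R) N :
  0 < N -> \sum_i c i = 0 -> \sum_i `|c i| < 2 -> (forall i, 0 <= r i <= N) ->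
  \sum_i c i * r i < N.
Proof.
move=> N_gt0 c_sum0 c_l1 r_bnd.
have -> : \sum_i c i * r i = \sum_i c i * (r i - N / 2).
  by under [RHS]eq_bigr do rewrite mulrBr; rewrite sumrB -mulr_suml c_sum0 mul0r subr0.
apply: (le_lt_trans (ler_norm _)); apply: (le_lt_trans (ler_norm_sum _ _ _)).
apply: (@le_lt_trans _ _ (\sum_i `|c i| * (N / 2))).
  apply: ler_sum => i _; rewrite normrM ler_wpM2l //.
  by have /andP[r0 rN] := r_bnd i; rewrite ler_distl; apply/andP; split; lra.
by rewrite -mulr_suml; nra.
Qed.

Definition lincomb (R : realType) (V : lmodType R[i]) n (a : 'I_n -> R) (Q : 'I_n -> V -> V) :
  V -> V := fun x => \sum_i (a i)%:C *: Q i x.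

Lemma lincomb0 (R : realType) (V : lmodType R[i]) (a : 'I_0 -> R) Q :
  lincomb a Q = fun _ : V => 0.
Proof. by apply: functional_extensionality => x; rewrite /lincomb big_ord0. Qed.

Lemma lincomb_recr (R : realType) (V : lmodType R[i]) n (a : 'I_n.+1 -> R) Q :
  lincomb a Q = (fun x : V => 1%:C *: lincomb (fun i => a (widen_ord (leqnSn n) i))
     (fun i => Q (widen_ord (leqnSn n) i)) x + (a ord_max)%:C *: Q ord_max x).
Proof.
by apply: functional_extensionality => x; rewrite /lincomb big_ord_recr rmorph1 scale1r.
Qed.

Lemma lincomb_delta (R : realType) (V : lmodType R[i]) n (Q : 'I_n -> V -> V) j :
  lincomb (fun i => (i == j)%:R) Q = Q j.
Proof.
apply: functional_extensionality => x; rewrite /lincomb (bigD1 j) //= eqxx scale1r.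
by rewrite big1 ?addr0 // => i /negbTE ->; rewrite scale0r.
Qed.

Lemma sum_delta_nat (R : pzSemiRingType) n (j : 'I_n) : \sum_i ((i == j)%:R : R) = 1.
Proof. by rewrite (bigD1 j) //= eqxx big1 ?addr0 // => i /negbTE ->. Qed.

Section RankComparison.
Variables (R : realType) (V : lmodType R[i]) (ip : V -> V -> R[i]).
Hypothesis hip : inner_product ip.

Lemma Pf_rank A : Pf ip A -> exists m, rank_eq A m.
Proof.
case=> [[[hl _] _ hi] [n [w hw]]].
have [m [v [hv hvw hwv]]] := basis_extraction (fun j => A (w j)).
exists m, v; split => // [i|x]; first by have [j ->] := hvw i; exists (w j).
rewrite -hi; have [c ->] := hw x; rewrite (clinear_sum hl).
by apply: span_sum => j _; rewrite (clinearZ hl); apply: spanZ.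
Qed.

Lemma orthoproj_rank_leq A B m m' : orthoproj ip A -> clinear B ->
  rank_eq A m -> rank_eq B m' -> (forall y, A y = y -> B y = 0 -> y = 0) -> (m <= m')%N.
Proof.
move=> [hlA _ hiA] hlB [v [hv hvA _]] [u [_ _ huB]] range_ker.
apply: (@steinitz _ _ _ _ (fun i => B (v i)) u) => [c hc|i]; last exact: huB.
have Av i : A (v i) = v i by have [x <-] := hvA i; rewrite hiA.
apply: hv; apply: range_ker.
  by rewrite (clinear_sum hlA); apply: eq_bigr => i _; rewrite (clinearZ hlA) Av.
by rewrite (clinear_sum hlB) -[RHS]hc; apply: eq_bigr => i _; rewrite (clinearZ hlB).
Qed.

Lemma Re_ip_lincomb n (a : 'I_n -> R) (Q : 'I_n -> V -> V) y :
  Re (ip (lincomb a Q y) y) = \sum_i a i * Re (ip (Q i y) y).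
Proof.
rewrite /lincomb (big_morph (fun x => ip x y) (fun x x' => ipDl hip x x' y) (ip0l hip y)).
rewrite (big_morph _ (@ReD R) (erefl : Re 0 = 0)).
by apply: eq_bigr => i _; rewrite (ipZl hip) ReMr.
Qed.

Lemma lincomb_range_ker n (Q : 'I_n -> V -> V) (a b : 'I_n -> R) :
  (forall i, orthoproj ip (Q i)) ->
  \sum_i a i = \sum_i b i -> \sum_i `|a i - b i| < 2 ->
  forall y, lincomb a Q y = y -> lincomb b Q y = 0 -> y = 0.
Proof.
move=> hQ ab_sum ab_l1 y Ay By; apply/eqP; apply: contraT => y_ne0.
have key : \sum_i (a i - b i) * Re (ip (Q i y) y) = Re (ip y y).
  under eq_bigr do rewrite mulrBl.
  by rewrite sumrB -!Re_ip_lincomb Ay By (ip0l hip) subr0.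
have := @zero_sum_comb_lt _ _ (fun i => a i - b i) (fun i => Re (ip (Q i y) y)) _
  (Re_ipxx_gt0 hip y_ne0).
rewrite /= key ltxx; apply => [|//|i]; first by rewrite sumrB ab_sum subrr.
by have := orthoproj_form hip (hQ i) y.
Qed.

End RankComparison.

Section RotationCoefficients.
Variable R : realFieldType.
Implicit Types s : R.

(* Coefficients of p_(u+sv) on p_u, p_v, p_(u+v) for orthonormal u, v (see [X_rot]). *)
Definition rot_coef s : 'I_3 -> R :=
  fun i => [:: (1 - s) / (1 + s ^+ 2); (s ^+ 2 - s) / (1 + s ^+ 2); 2 * s / (1 + s ^+ 2)]`_i.

Let D_gt0 s : 0 < 1 + s ^+ 2. Proof. by rewrite ltr_pwDl // sqr_ge0. Qed.

Let sum3 (F : 'I_3 -> R) : \sum_i F i = F ord0 + F (lift ord0 ord0) + F (lift ord0 (lift ord0 ord0)).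
Proof. by rewrite !big_ord_recl big_ord0 addr0 addrA. Qed.

Lemma rot_coef_sum s : \sum_i rot_coef s i = 1.
Proof. by rewrite sum3 /rot_coef /=; field; rewrite gt_eqF ?D_gt0. Qed.

Let dist3_lt (n0 n1 n2 D : R) : 0 < D -> `|n0| + `|n1| + `|n2| < 2 * D ->
  `|n0 / D| + `|n1 / D| + `|n2 / D| < 2.
Proof.
move=> D0; rewrite !normrM (@gtr0_norm _ D^-1) ?invr_gt0 // -!mulrDl => h.
by rewrite ltr_pdivrMr.
Qed.

Lemma rot_coef_near_u s : 0 <= s <= 1 / 2 ->
  \sum_i `|rot_coef s i - (i == 0)%:R| < 2.
Proof.
move=> /andP[s0 s1]; rewrite sum3 /rot_coef /= !subr0.
rewrite (_ : (1 - s) / (1 + s ^+ 2) - 1 = (- s - s ^+ 2) / (1 + s ^+ 2)); last first.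
  by field; rewrite gt_eqF ?D_gt0.
apply: dist3_lt => //.
have n0 : - s - s ^+ 2 <= 0 by nra.
have n1 : s ^+ 2 - s <= 0 by nra.
rewrite (ler0_norm n0) (ler0_norm n1) ger0_norm; nra.
Qed.

Lemma rot_coef_near_uv s : 0 < s -> \sum_i `|rot_coef s i - (i == 2)%:R| < 2.
Proof.
move=> s0; rewrite sum3 /rot_coef /= !subr0.
rewrite (_ : 2 * s / (1 + s ^+ 2) - 1 = (- (1 - s) ^+ 2) / (1 + s ^+ 2)); last first.
  by field; rewrite gt_eqF ?D_gt0.
apply: dist3_lt => //; rewrite normrN (ger0_norm (sqr_ge0 (1 - s))).
have [s1|s1] := lerP s 1.
  have n1 : s ^+ 2 - s <= 0 by nra.
  by rewrite (ler0_norm n1); nra.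
have n1 : 0 <= s ^+ 2 - s by nra.
by rewrite (ger0_norm n1); nra.
Qed.

End RotationCoefficients.

Lemma conjc_div (R : realType) (p q : R[i]) : conjc (p / q) = conjc p / conjc q.
Proof. by rewrite -conjc_inv; apply: rmorphM. Qed.

Section RankOneProjections.
Variables (R : realType) (V : lmodType R[i]) (ip : V -> V -> R[i]).
Hypothesis hip : inner_product ip.
Implicit Types (w x y : V).

(* For [w = 0] the division by [ip w w = 0] makes this the zero map. *)
Definition lineproj w : V -> V := fun x => (ip x w / ip w w) *: w.

Lemma lineproj_clinear w : clinear (lineproj w).
Proof.
move=> a x y; rewrite /lineproj (ipDl hip) (ipZl hip) scalerA -scalerDl.
by rewrite mulrDl mulrA.
Qed.

Lemma lineproj_selfadjoint w : selfadjoint ip (lineproj w).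
Proof.
move=> x y; rewrite /lineproj (ipZl hip) (ipZr hip) conjc_div (conj_ipxx hip).
by rewrite -(ipC hip) mulrAC [RHS]mulrC mulrA.
Qed.

Lemma lineproj_id w : w != 0 -> lineproj w w = w.
Proof. by rewrite -(ipxx_eq0 hip) => hw; rewrite /lineproj mulfV ?scale1r. Qed.

Lemma lineproj_orth w x : ip x w = 0 -> lineproj w x = 0.
Proof. by move=> h; rewrite /lineproj h mul0r scale0r. Qed.

Lemma lineproj_idem w x : lineproj w (lineproj w x) = lineproj w x.
Proof.
have [->|hw] := eqVneq w 0; first by rewrite /lineproj !scaler0.
by rewrite {2}/lineproj (clinearZ (lineproj_clinear w)) lineproj_id.
Qed.

Lemma lineprojZ (c : R[i]) w : c != 0 -> lineproj (c *: w) = lineproj w.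
Proof.
have [->|hw] := eqVneq w 0; first by rewrite scaler0.
move=> hc; apply: functional_extensionality => x.
rewrite /lineproj (ipZr hip) (ipZl hip) (ipZr hip) scalerA; congr (_ *: _).
have := hw; rewrite -(ipxx_eq0 hip) => hw'.
by field; rewrite hw' conjc_eq0 hc.
Qed.

Lemma hnorm_gt0 w : w != 0 -> 0 < hnorm ip w.
Proof. by move=> hw; rewrite /hnorm sqrtr_gt0 (Re_ipxx_gt0 hip hw). Qed.

Lemma hnorm_sq w : hnorm ip w ^+ 2 = Re (ip w w).
Proof. by rewrite /hnorm sqr_sqrtr ?(Re_ipxx_ge0 hip). Qed.

Definition normalize w := ((hnorm ip w)^-1)%:C *: w.

Lemma normalize_unit w : w != 0 -> ip (normalize w) (normalize w) = 1.
Proof.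
move=> hw; have hn := hnorm_gt0 hw.
rewrite /normalize (ipZl hip) (ipZr hip) conjc_real (ipxx_real hip w) -hnorm_sq -!rmorphM.
by rewrite -[1]/(1%:C); congr (_%:C); field; rewrite gt_eqF ?D_gt0.
Qed.

Lemma normalizeK w : w != 0 -> (hnorm ip w)%:C *: normalize w = w.
Proof.
move=> hw; have hn := hnorm_gt0 hw.
by rewrite /normalize scalerA -rmorphM mulfV ?gt_eqF // scale1r.
Qed.

Lemma lineproj_normalize w : lineproj (normalize w) = lineproj w.
Proof.
have [->|hw] := eqVneq w 0; first by rewrite /normalize scaler0.
apply: lineprojZ; rewrite -[0]/(0%:C) (inj_eq (@complexI _)) invr_eq0 gt_eqF //.
exact: hnorm_gt0.
Qed.

End RankOneProjections.

Section ProjectionOnto.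
Variables (R : realType) (V : lmodType R[i]) (ip : V -> V -> R[i]).
Hypothesis hip : inner_product ip.

Definition proj_onto (X : V -> V) n (v : 'I_n -> V) :=
  [/\ orthoproj ip X, (forall x, in_span v (X x)) & (forall i, X (v i) = v i)].

Lemma proj_onto_fix X n (v : 'I_n -> V) y : proj_onto X v -> in_span v y -> X y = y.
Proof.
move=> [[hl _ _] _ hv] [c ->]; rewrite (clinear_sum hl).
by apply: eq_bigr => i _; rewrite (clinearZ hl) hv.
Qed.

Lemma proj_onto_unique X Y n (v : 'I_n -> V) : proj_onto X v -> proj_onto Y v -> X = Y.
Proof.
move=> hX hY; have [[_ hsX _] hspX _] := hX; have [[_ hsY _] hspY _] := hY.
have YX x : Y (X x) = X x by apply: proj_onto_fix hY _.
have XY x : X (Y x) = Y x by apply: proj_onto_fix hX _.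
apply: functional_extensionality => x; apply: (ip_inj_l hip) => z.
by rewrite -YX hsY hsX XY -hsY.
Qed.

Lemma proj_onto_Pk X n (v : 'I_n -> V) : proj_onto X v -> lin_indep v -> Pk ip n X.
Proof.
move=> [hX hsp hv] hind; split; first exact: orthoproj_projection.
by exists v; split => // i; exists (v i).
Qed.

Lemma Pk_proj_onto X n : Pk ip n X -> exists v : 'I_n -> V, lin_indep v /\ proj_onto X v.
Proof.
move=> [hX [v [hind hvX hsp]]]; exists v; split => //; split => //.
  exact: projection_orthoproj.
by move=> i; have [x <-] := hvX i; case: hX.
Qed.

Lemma proj_onto_perm X n (v : 'I_n -> V) (s : {perm 'I_n}) :
  proj_onto X v -> proj_onto X (v \o s).
Proof.
move=> [hX hsp hv]; split => // [x|i]; last exact: hv.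
have [c ->] := hsp x; exists (c \o s).
by rewrite (reindex_inj (@perm_inj _ s)).
Qed.

Section Extension.
Variables (G : V -> V) (n : nat) (g : 'I_n -> V).
Hypothesis hG : proj_onto G g.

Let hGo : orthoproj ip G. Proof. by case: hG. Qed.
Let hGl : clinear G. Proof. by case: hGo. Qed.

Lemma proj_onto_ker_ne0 i a : lin_indep (insert_at i a g) -> a - G a != 0.
Proof.
move=> ha; rewrite subr_eq0; apply/negP => /eqP Ga; apply: (insert_notin_span ha).
by rewrite Ga; case: hG.
Qed.

Lemma ext_orthoproj w : G w = 0 -> orthoproj ip (fun x => G x + lineproj ip w x).
Proof.
move=> Gw; case: hGo => _ hs hi; have hl := lineproj_clinear hip w.
have ipGw x : ip (G x) w = 0 by rewrite hs Gw (ip0r hip).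
split.
- by move=> a x y /=; rewrite hGl hl scalerDr addrACA.
- by move=> x y /=; rewrite (ipDl hip) (ipDr hip) hs (lineproj_selfadjoint hip).
- move=> x /=; rewrite (clinearD hGl) (clinearD hl) hi (lineproj_orth (ipGw x)) add0r.
  have -> : G (lineproj ip w x) = 0 by rewrite /lineproj (clinearZ hGl) Gw scaler0.
  by rewrite addr0 (lineproj_idem hip).
Qed.

Lemma proj_onto_ext i a : a - G a != 0 ->
  proj_onto (fun x => G x + lineproj ip (a - G a) x) (insert_at i a g).
Proof.
have Gw : G (a - G a) = 0 := orthoproj_ker hGo a.
set w := a - G a in Gw * => hw; have [_ hsp hg] := hG.
have ipGw x : ip (G x) w = 0 by case: hGo => _ -> _; rewrite Gw (ip0r hip).
split; first exact: ext_orthoproj.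
  move=> x; apply: spanD; first exact: span_insert.
  apply: spanZ; apply: spanB; last exact: span_insert.
  by have := span_mem (insert_at i a g) i; rewrite insert_at_id.
move=> l; case: (unliftP i l) => [j ->|->]; rewrite ?insert_at_lift ?insert_at_id.
  by rewrite hg lineproj_orth ?addr0 // -hg ipGw.
have -> : a = G a + w by rewrite addrC subrK.
rewrite (clinearD hGl) (clinearD (lineproj_clinear hip w)) lineproj_id //.
by rewrite (lineproj_orth (ipGw _)) Gw add0r addr0; case: hGo => _ _ ->.
Qed.

Lemma Pk_ext w : lin_indep g -> w != 0 -> G w = 0 ->
  Pk ip n.+1 (fun x => G x + lineproj ip w x).
Proof.
move=> hg hw Gw.
have w_out : ~ in_span g w.
  by move=> /(proj_onto_fix hG); rewrite Gw => w0; rewrite -w0 eqxx in hw.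
have := @proj_onto_ext ord_max w; rewrite Gw subr0 => /(_ hw) onto.
by apply: (proj_onto_Pk onto); apply: lin_indep_insert.
Qed.

End Extension.

Lemma exists_proj_onto n (v : 'I_n -> V) : lin_indep v -> exists X, proj_onto X v.
Proof.
elim: n v => [|n IH] v hv.
  exists (fun _ => 0); split => [|x|[]//]; last exact: span0.
  by split => [a x y|x y|x] //; rewrite ?scaler0 ?addr0 // (ip0l hip) (ip0r hip).
have [G hG] := IH _ (lin_indep_lift (i := ord_max) hv).
rewrite -(insert_at_drop ord_max v) in hv *.
exists (fun x => G x + lineproj ip (v ord_max - G (v ord_max)) x).
by apply: (proj_onto_ext hG); apply: (proj_onto_ker_ne0 hG hv).
Qed.

End ProjectionOnto.

Section FiniteRankSelfAdjoint.
Variables (R : realType) (V : lmodType R[i]) (ip : V -> V -> R[i]).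
Hypothesis hip : inner_product ip.

Lemma Re_ipZ (a : R) x : Re (ip (a%:C *: x) (a%:C *: x)) = a ^+ 2 * Re (ip x x).
Proof. by rewrite (ipZl hip) (ipZr hip) conjc_real mulrA -rmorphM ReMr expr2. Qed.

Lemma Re_ipD_le x y : Re (ip (x + y) (x + y)) <= 2 * (Re (ip x x) + Re (ip y y)).
Proof.
have parallelogram : ip (x + y) (x + y) + ip (x - y) (x - y) = 2%:R * (ip x x + ip y y).
  by rewrite !(ipDl hip) !(ipNl hip) !(ipDr hip) !(ipNr hip); ring.
have two_real : 2%:R = (2 : R)%:C :> R[i] by rewrite rmorphMn rmorph1.
have := congr1 (@complex.Re R) parallelogram; rewrite ReD two_real ReMr ReD.
by have := Re_ipxx_ge0 hip (x - y); lra.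
Qed.

Lemma Re_ip_bound (A : V -> V) C x : (forall x, hnorm ip (A x) <= C * hnorm ip x) ->
  Re (ip (A x) (A x)) <= C ^+ 2 * Re (ip x x).
Proof.
move=> /(_ x); rewrite -!hnorm_sq // -exprMn => hC.
by rewrite ler_pXn2r ?nnegrE ?(le_trans _ hC) ?sqrtr_ge0.
Qed.

Lemma bounded_op_comb (a b : R) (A B : V -> V) : bounded_op ip A -> bounded_op ip B ->
  bounded_op ip (fun x => a%:C *: A x + b%:C *: B x).
Proof.
move=> [hlA [CA hCA]] [hlB [CB hCB]]; split.
  move=> c x y; rewrite hlA hlB !scalerDr !scalerA [c * a%:C]mulrC [c * b%:C]mulrC.
  by rewrite addrACA.
exists (Num.sqrt (2 * (a ^+ 2 * CA ^+ 2 + b ^+ 2 * CB ^+ 2))) => x.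
have k_ge0 : 0 <= 2 * (a ^+ 2 * CA ^+ 2 + b ^+ 2 * CB ^+ 2).
  by rewrite -!exprMn; apply: mulr_ge0 => //; apply: addr_ge0; apply: sqr_ge0.
rewrite /hnorm -sqrtrM // ler_sqrt; last by rewrite mulr_ge0 // (Re_ipxx_ge0 hip).
apply: (le_trans (Re_ipD_le _ _)); rewrite !Re_ipZ.
have hA := ler_wpM2l (sqr_ge0 a) (Re_ip_bound x hCA).
have hB := ler_wpM2l (sqr_ge0 b) (Re_ip_bound x hCB).
lra.
Qed.

Lemma selfadjoint_comb (a b : R) (A B : V -> V) : selfadjoint ip A -> selfadjoint ip B ->
  selfadjoint ip (fun x => a%:C *: A x + b%:C *: B x).
Proof.
move=> hsA hsB x y; rewrite (ipDl hip) !(ipZl hip) (ipDr hip) !(ipZr hip) !conjc_real.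
by rewrite hsA hsB.
Qed.

Lemma finite_rank_comb (a b : R) (A B : V -> V) : finite_rank A -> finite_rank B ->
  finite_rank (fun x => a%:C *: A x + b%:C *: B x).
Proof.
move=> [n1 [w1 hw1]] [n2 [w2 hw2]].
pose w l := match split l with inl i => w1 i | inr j => w2 j end.
have w1w i : in_span w (w1 i) by have := span_mem w (unsplit (inl i)); rewrite /w unsplitK.
have w2w j : in_span w (w2 j) by have := span_mem w (unsplit (inr j)); rewrite /w unsplitK.
exists (n1 + n2)%N, w => x.
by apply: spanD; apply: spanZ; [apply: span_trans (hw1 x) w1w | apply: span_trans (hw2 x) w2w].
Qed.

Lemma Fs_comb (a b : R) (A B : V -> V) : Fs ip A -> Fs ip B ->
  Fs ip (fun x => a%:C *: A x + b%:C *: B x).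
Proof.
move=> [hbA hsA hfA] [hbB hsB hfB].
by split; [apply: bounded_op_comb | apply: selfadjoint_comb | apply: finite_rank_comb].
Qed.

Lemma Fs0 : Fs ip (fun _ => 0).
Proof.
split; last by exists 0%N, (fun _ => 0) => x; apply: span0.
  by split => [a x y|]; [rewrite scaler0 addr0 | exists 0 => x; rewrite /hnorm (ip0l hip) mul0r sqrtr0].
by move=> x y; rewrite (ip0l hip) (ip0r hip).
Qed.

Lemma Pk_Fs X n : Pk ip n X -> Fs ip X.
Proof. by move=> [[hb hs _] [v [_ _ hv]]]; split => //; exists n, v. Qed.

Lemma Fs_lincomb n (a : 'I_n -> R) (Q : 'I_n -> V -> V) :
  (forall i, Fs ip (Q i)) -> Fs ip (lincomb a Q).
Proof.
elim: n a Q => [|n IH] a Q hQ; last by rewrite lincomb_recr; apply: Fs_comb => //; apply: IH.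
by rewrite lincomb0; apply: Fs0.
Qed.

End FiniteRankSelfAdjoint.

Section LinearOnFs.
Variables (R : realType) (H K : lmodType R[i]) (ipH : H -> H -> R[i]) (ipK : K -> K -> R[i]).
Hypothesis hH : inner_product ipH.
Variable phi : (H -> H) -> (K -> K).
Hypothesis hphi : Fs_linear ipH ipK phi.

Lemma phi_lincomb n (a : 'I_n -> R) (Q : 'I_n -> H -> H) :
  (forall i, Fs ipH (Q i)) -> phi (lincomb a Q) = lincomb a (fun i => phi (Q i)).
Proof.
case: hphi => _ hlin; elim: n a Q => [|n IH] a Q hQ.
  have := hlin 0 0 _ _ (Fs0 hH) (Fs0 hH); rewrite !lincomb0 rmorph0 scaler0 addr0 => ->.
  by apply: functional_extensionality => y; rewrite !scale0r addr0.
rewrite !lincomb_recr hlin //; last by apply: (Fs_lincomb hH) => i; apply: hQ.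
by apply: functional_extensionality => y; rewrite IH // => i; apply: hQ.
Qed.

End LinearOnFs.

Section RankInvariance.
Variables (R : realType) (H K : lmodType R[i]) (ipH : H -> H -> R[i]) (ipK : K -> K -> R[i]).
Hypotheses (hH : inner_product ipH) (hK : inner_product ipK).
Variable phi : (H -> H) -> (K -> K).
Hypothesis hphi : Fs_linear ipH ipK phi.
Variable k : nat.
Hypothesis hPf : forall P, Pk ipH k P -> Pf ipK (phi P).

Definition same_rank (X Y : H -> H) := forall m, Pk ipK m (phi X) <-> Pk ipK m (phi Y).

Lemma same_rank_refl X : same_rank X X.
Proof. by []. Qed.

Lemma same_rank_sym X Y : same_rank X Y -> same_rank Y X.
Proof. by move=> h m; split => /h. Qed.

Lemma same_rank_trans X Y Z : same_rank X Y -> same_rank Y Z -> same_rank X Z.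
Proof. by move=> h1 h2 m; split => [/h1/h2|/h2/h1]. Qed.

Lemma phi_orthoproj X : Pk ipH k X -> orthoproj ipK (phi X).
Proof. by move=> /hPf [hp _]; apply: projection_orthoproj. Qed.

Lemma Pk_phi_transfer X Y m : Pk ipH k X -> Pk ipH k Y ->
  (forall y, phi X y = y -> phi Y y = 0 -> y = 0) ->
  (forall y, phi Y y = y -> phi X y = 0 -> y = 0) ->
  Pk ipK m (phi X) -> Pk ipK m (phi Y).
Proof.
move=> hX hY XY YX [_ rX]; have [mY rY] := Pf_rank (hPf hY).
have [pX pY] := (phi_orthoproj hX, phi_orthoproj hY).
have [[lX _ _] [lY _ _]] := (pX, pY).
suff -> : m = mY by split=> //; case: (hPf hY).
by apply/eqP; rewrite eqn_leq (orthoproj_rank_leq pX lY rX rY XY) (orthoproj_rank_leq pY lX rY rX YX).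
Qed.

Lemma same_rank_lincomb n (Q : 'I_n -> H -> H) (a b : 'I_n -> R) X Y :
  (forall i, Pk ipH k (Q i)) -> Pk ipH k X -> Pk ipH k Y ->
  X = lincomb a Q -> Y = lincomb b Q ->
  \sum_i a i = \sum_i b i -> \sum_i `|a i - b i| < 2 -> same_rank X Y.
Proof.
move=> hQ hX hY eX eY ab_sum ab_l1.
have FsQ i : Fs ipH (Q i) by apply: Pk_Fs (hQ i).
have phiQ i : orthoproj ipK (phi (Q i)) by apply: phi_orthoproj.
have ba_l1 : \sum_i `|b i - a i| < 2 by under eq_bigr do rewrite distrC.
have [eX' eY'] : phi X = lincomb a (fun i => phi (Q i)) /\ phi Y = lincomb b (fun i => phi (Q i)).
  by rewrite eX eY !(phi_lincomb hH hphi).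
have XY := lincomb_range_ker hK phiQ ab_sum ab_l1.
have YX := lincomb_range_ker hK phiQ (esym ab_sum) ba_l1.
by move=> m; split; apply: Pk_phi_transfer; rewrite // eX' eY'.
Qed.

Section Rotation.
Variable G : H -> H.
Hypothesis hGl : clinear G.
Hypothesis hGk : forall w, w != 0 -> G w = 0 -> Pk ipH k (fun x => G x + lineproj ipH w x).

Let X w := fun x => G x + lineproj ipH w x.

Section Orthonormal.
Variables u v : H.
Hypotheses (huu : ipH u u = 1) (hvv : ipH v v = 1) (huv : ipH u v = 0).
Hypotheses (hGu : G u = 0) (hGv : G v = 0).

Let hvu : ipH v u = 0. Proof. by rewrite (ipC hH) huv conjc0. Qed.

Lemma ip_rot (s : R) : ipH (u + s%:C *: v) (u + s%:C *: v) = (1 + s ^+ 2)%:C.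
Proof.
rewrite !(ipDl hH) !(ipDr hH) !(ipZl hH) !(ipZr hH) huu hvv huv hvu conjc_real.
by rewrite rmorphD rmorph1 rmorphXn; ring.
Qed.

Lemma Pk_rot (s : R) : Pk ipH k (X (u + s%:C *: v)).
Proof.
apply: hGk; last by rewrite (clinearD hGl) (clinearZ hGl) hGu hGv scaler0 addr0.
rewrite -(ipxx_eq0 hH) ip_rot -[0]/(0%:C) (inj_eq (@complexI _)) gt_eqF //.
by rewrite ltr_pwDl ?sqr_ge0.
Qed.

Let Q (i : 'I_3) := X [:: u; v; u + v]`_i.

Let PkQ i : Pk ipH k (Q i).
Proof.
case: i => [[|[|[|//]]]] ? ; rewrite /Q /=.
- by have := Pk_rot 0; rewrite scale0r addr0.
- by apply: hGk => //; rewrite -(ipxx_eq0 hH) hvv oner_neq0.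
- by have := Pk_rot 1; rewrite scale1r.
Qed.

Lemma X_rot (s : R) : X (u + s%:C *: v) = lincomb (rot_coef s) Q.
Proof.
have D_neq0 : 1 + s%:C ^+ 2 != 0.
  have : (1 + s ^+ 2)%:C != 0 :> R[i].
    by rewrite -[0]/(0%:C) (inj_eq (@complexI _)) gt_eqF // ltr_pwDl ?sqr_ge0.
  by rewrite rmorphD rmorph1 rmorphXn.
apply: functional_extensionality => x.
pose cb (k0 k1 k2 : R[i]) := k0 *: G x + k1 *: u + k2 *: v.
have cbD a0 a1 a2 b0 b1 b2 : cb a0 a1 a2 + cb b0 b1 b2 = cb (a0 + b0) (a1 + b1) (a2 + b2).
  by rewrite /cb !scalerDl addrACA [X in X + _ = _]addrACA.
have cbZ c a0 a1 a2 : c *: cb a0 a1 a2 = cb (c * a0) (c * a1) (c * a2).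
  by rewrite /cb !scalerDr !scalerA.
set p := ipH x u; set q := ipH x v.
have Xu : X u x = cb 1 p 0 by rewrite /X /lineproj /cb huu divr1 scale1r scale0r addr0.
have Xv : X v x = cb 1 0 q by rewrite /X /lineproj /cb hvv divr1 scale1r scale0r addr0.
have Xuv : X (u + v) x = cb 1 ((p + q) / 2) ((p + q) / 2).
  rewrite /X /lineproj (_ : ipH (u + v) (u + v) = 2); last first.
    by rewrite !(ipDl hH) !(ipDr hH) huu hvv huv hvu; ring.
  by rewrite /cb scale1r (ipDr hH) scalerDr addrA.
have Xs : X (u + s%:C *: v) x =
    cb 1 ((p + s%:C * q) / (1 + s%:C ^+ 2)) ((p + s%:C * q) / (1 + s%:C ^+ 2) * s%:C).
  rewrite /X /lineproj /cb ip_rot scale1r (ipDr hH) (ipZr hH) conjc_real.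
  by rewrite rmorphD rmorph1 rmorphXn scalerDr scalerA addrA.
rewrite /lincomb !big_ord_recl big_ord0 addr0 /= /Q /= Xs Xu Xv Xuv !cbZ !cbD /cb /rot_coef /=.
rewrite !(fmorph_div, rmorphB, rmorphD, rmorphM, rmorphXn, rmorph1) /=.
by congr (_ *: _ + _ *: _ + _ *: _); field.
Qed.

Lemma same_rank_rot_u (s : R) : 0 <= s <= 1 / 2 -> same_rank (X (u + s%:C *: v)) (X u).
Proof.
move=> hs; apply: (@same_rank_lincomb _ Q (rot_coef s) (fun i => (i == 0)%:R) _ _
  PkQ (Pk_rot s) (PkQ 0) (X_rot s)).
- by rewrite lincomb_delta.
- by rewrite rot_coef_sum sum_delta_nat.
- exact: rot_coef_near_u.
Qed.

Lemma same_rank_rot_uv (s : R) : 0 < s -> same_rank (X (u + s%:C *: v)) (X (u + v)).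
Proof.
move=> hs; apply: (@same_rank_lincomb _ Q (rot_coef s) (fun i => (i == 2)%:R) _ _
  PkQ (Pk_rot s) (PkQ 2) (X_rot s)).
- by rewrite lincomb_delta.
- by rewrite rot_coef_sum sum_delta_nat.
- exact: rot_coef_near_uv.
Qed.

Lemma same_rank_rot (s : R) : 0 <= s -> same_rank (X (u + s%:C *: v)) (X u).
Proof.
move=> s0; have [s_small|s_large] := lerP s (1 / 2).
  by apply: same_rank_rot_u; rewrite s0.
have half_gt0 : 0 < 1 / 2 :> R by lra.
apply: same_rank_trans (same_rank_rot_uv (lt_trans half_gt0 s_large)) _.
apply: same_rank_trans (same_rank_sym (same_rank_rot_uv half_gt0)) _.
by apply: same_rank_rot_u; rewrite lexx ltW.
Qed.

End Orthonormal.

Lemma same_rank_orth u v : ipH u u = 1 -> ipH v v = 1 -> ipH u v = 0 ->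
  G u = 0 -> G v = 0 -> same_rank (X v) (X u).
Proof.
move=> huu hvv huv hGu hGv; have hvu : ipH v u = 0 by rewrite (ipC hH) huv conjc0.
have := same_rank_rot huu hvv huv hGu hGv ler01; rewrite scale1r => uv_u.
have := same_rank_rot hvv huu hvu hGv hGu ler01; rewrite scale1r addrC => uv_v.
exact: same_rank_trans (same_rank_sym uv_v) uv_u.
Qed.

Lemma same_rank_perp u w : ipH u u = 1 -> ipH u w = 0 -> G u = 0 -> G w = 0 ->
  same_rank (X (u + w)) (X u).
Proof.
move=> huu huw hGu hGw; have [->|w_neq0] := eqVneq w 0; first by rewrite addr0.
have hv : ipH (normalize ipH w) (normalize ipH w) = 1 by apply: normalize_unit.
have huv : ipH u (normalize ipH w) = 0 by rewrite (ipZr hH) huw mulr0.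
have hGv : G (normalize ipH w) = 0 by rewrite (clinearZ hGl) hGw scaler0.
rewrite -(normalizeK hH w_neq0).
apply: (same_rank_rot huu hv huv hGu hGv); apply: ltW.
by rewrite (hnorm_gt0 hH w_neq0).
Qed.

Lemma same_rank_ker a b : a != 0 -> b != 0 -> G a = 0 -> G b = 0 -> same_rank (X a) (X b).
Proof.
move=> a_neq0 b_neq0 hGa hGb; set u := normalize ipH a.
have huu : ipH u u = 1 by apply: normalize_unit.
have hGu : G u = 0 by rewrite (clinearZ hGl) hGa scaler0.
have -> : X a = X u by rewrite /X /u (lineproj_normalize hH).
apply: same_rank_sym; set c := ipH b u.
have [c0|c_neq0] := eqVneq c 0.
  have -> : X b = X (normalize ipH b) by rewrite /X (lineproj_normalize hH).
  apply: same_rank_orth => //; first exact: normalize_unit.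
    by rewrite (ipZr hH) (ipC hH) -/c c0 conjc0 !mulr0.
  by rewrite (clinearZ hGl) hGb scaler0.
set w := c^-1 *: (b - c *: u).
have -> : X b = X (u + w).
  rewrite /X -(lineprojZ hH (u + w) c_neq0) /w scalerDr [c *: (c^-1 *: _)]scalerA.
  by rewrite mulfV // scale1r addrC subrK.
apply: same_rank_perp => //.
  by rewrite (ipZr hH) (ipBr hH) (ipZr hH) huu mulr1 -(ipC hH) subrr mulr0.
by rewrite (clinearZ hGl) (clinearB hGl) (clinearZ hGl) hGb hGu scaler0 subrr scaler0.
Qed.

End Rotation.

Lemma same_rank_exchange n (g : 'I_n -> H) (i : 'I_n.+1) a b X Y : k = n.+1 ->
  lin_indep (insert_at i a g) -> lin_indep (insert_at i b g) ->
  proj_onto ipH X (insert_at i a g) -> proj_onto ipH Y (insert_at i b g) -> same_rank X Y.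
Proof.
move=> hk ha hb hX hY.
have hg : lin_indep g by have := lin_indep_lift (i := i) ha; rewrite insert_atK.
have [G hG] := exists_proj_onto hH hg; have [hGo _ _] := hG; have [hGl _ _] := hGo.
have ext c Z : lin_indep (insert_at i c g) -> proj_onto ipH Z (insert_at i c g) ->
    c - G c != 0 /\ Z = (fun x => G x + lineproj ipH (c - G c) x).
  move=> hc hZ; have hw := proj_onto_ker_ne0 hG hc.
  by split=> //; apply: (proj_onto_unique hH hZ); apply: (proj_onto_ext hH hG).
have [[a_neq0 ->] [b_neq0 ->]] := (ext a X ha hX, ext b Y hb hY).
apply: (same_rank_ker hGl _ a_neq0 b_neq0 (orthoproj_ker hGo a) (orthoproj_ker hGo b)).
by move=> w w_neq0 Gw; rewrite hk; apply: (Pk_ext hH hG hg).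
Qed.

Lemma same_rank_chain_step n (f c : 'I_n.+1 -> H) (j : 'I_n.+1) P : k = n.+1 ->
  lin_indep f -> lin_indep c -> (forall i : 'I_n.+1, (i < j)%N -> c i = f i) ->
  (forall X, proj_onto ipH X c -> same_rank P X) ->
  exists c' : 'I_n.+1 -> H, [/\ lin_indep c', (forall i : 'I_n.+1, (i <= j)%N -> c' i = f i) &
    forall X, proj_onto ipH X c' -> same_rank P X].
Proof.
move=> hk hf hc cf hPc.
have [l jl fj_out] := exchange_index hc hf cf.
set c1 := insert_at l (f j) (fun m => c (lift l m)).
have hc1 : lin_indep c1 by apply: lin_indep_insert => //; apply: lin_indep_lift.
exists (c1 \o tperm l j); split.
- exact: lin_indep_perm.
- move=> i; rewrite leq_eqVlt => /orP[/eqP/val_inj ->|ij] /=.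
    by rewrite tpermR /c1 insert_at_id.
  have il : i != l by apply: contraTneq jl => <-; rewrite -ltnNge.
  have ij' : i != j by apply: contraTneq ij => ->; rewrite ltnn.
  rewrite tpermD 1?eq_sym // -cf //; case: (unliftP l i) => [m ->|il'].
    by rewrite /c1 insert_at_lift.
  by rewrite il' eqxx in il.
- move=> X hX; have [Xc hXc] := exists_proj_onto hH hc.
  apply: same_rank_trans (hPc _ hXc) _.
  have hX1 : proj_onto ipH X c1.
    have := proj_onto_perm (tperm l j) hX.
    suff -> : (c1 \o tperm l j) \o tperm l j = c1 by [].
    by apply: functional_extensionality => m /=; rewrite tpermK.
  rewrite -(insert_at_drop l c) in hc hXc.
  exact: same_rank_exchange hk hc hc1 hXc hX1.
Qed.

Lemma same_rank_chain n (e f : 'I_n.+1 -> H) P P' : k = n.+1 ->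
  lin_indep e -> lin_indep f -> proj_onto ipH P e -> proj_onto ipH P' f -> same_rank P P'.
Proof.
move=> hk he hf onto_e onto_f.
suff step j : (j <= n.+1)%N -> exists c : 'I_n.+1 -> H, [/\ lin_indep c,
    (forall i : 'I_n.+1, (i < j)%N -> c i = f i) & forall X, proj_onto ipH X c -> same_rank P X].
  have [c [_ cf hPc]] := step _ (leqnn _).
  by apply: hPc; have -> : c = f by apply: functional_extensionality => i; apply: cf.
elim: j => [_|j IH hj].
  by exists e; split=> // X hX; rewrite (proj_onto_unique hH hX onto_e).
have [c [hc cf hPc]] := IH (ltnW hj).
exact: (same_rank_chain_step (j := Ordinal hj) hk hf hc cf hPc).
Qed.

Lemma same_rank_Pk P P' : Pk ipH k P -> Pk ipH k P' -> same_rank P P'.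
Proof.
move=> /Pk_proj_onto[e [he onto_e]] /Pk_proj_onto[f [hf onto_f]].
move: e f he hf onto_e onto_f; case hk: k => [|n] e f he hf onto_e onto_f.
  have ef : e = f by apply: functional_extensionality => -[].
  by rewrite ef in onto_e; rewrite (proj_onto_unique hH onto_e onto_f); apply: same_rank_refl.
exact: same_rank_chain hk he hf onto_e onto_f.
Qed.

End RankInvariance.

Theorem proposition4p1 (R : realType) (H K : lmodType R[i])
  (ipH : H -> H -> R[i]) (ipK : K -> K -> R[i])
  (hH : hilbert ipH) (hK : hilbert ipK)
  (k : nat) (hk : dim_gt H k)
  (phi : (H -> H) -> (K -> K)) (hphi : Fs_linear ipH ipK phi)
  (hPf : forall P, Pk ipH k P -> Pf ipK (phi P)) :
  exists m : nat, dim_ge K m /\ (forall P, Pk ipH k P -> Pk ipK m (phi P)).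
Proof.
have [[ipH_inner _] [ipK_inner _]] := (hH, hK).
case: (classic (exists P0, Pk ipH k P0)) => [[P0 hP0]|no_Pk]; last first.
  exists 0%N; split; first by exists (fun _ => 0) => c _ [].
  by move=> P hP; case: no_Pk; exists P.
have [m rank_m] := Pf_rank (hPf P0 hP0).
have [v [hv _ _]] := rank_m.
exists m; split; first by exists v.
move=> P hP; apply/(same_rank_Pk ipH_inner ipK_inner hphi hPf hP0 hP).
by split=> //; case: (hPf P0 hP0).
Qed.
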